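(* Let $P=(P;\tau,\le,\zeta)$ be a $pm$-space of height at most $1$ and let $X\subseteq P$ be a clopen decreasing set, regarded as an element of the dual algebra $E(P)$. Then for every $n<\omega$, $$X^{n(\prime\ast)}=\{x\in P:\ \ell(x,P\setminus X)>n\}\ \text{ if $n$ is even},\qquad X^{n(\prime\ast)}=\{x\in P:\ \ell(x,\zeta(P\setminus X))>n\}\ \text{ if $n$ is odd}.$$ Moreover, for $x\in P$, $\ell(x,P\setminus X)$ is infinite if and only if $Q_x\subseteq X$, and $\ell(x,\zeta(P\setminus X))$ is infinite if and only if $\zeta(Q_x)\subseteq X$.
   Context: A $pm$-space is $(P;\tau,\le,\zeta)$ where $(P;\tau,\le)$ is a Priestley space, $[X)$ is clopen for every clopen decreasing $X$, and $\zeta$ is a continuous order-reversing involution. Its dual algebra $E(P)$ consists of the clopen decreasing subsets of $P$ with $\cap,\cup,\emptyset,P$, $X^\ast=P\setminus[X)$ and $X'=P\setminus\zeta(X)$. For an element $x$ of a $pm$-algebra, $x^{0(\prime\ast)}=x$ and $x^{(k+1)(\prime\ast)}=((x^{k(\prime\ast)})')^\ast$. For $x,y\in P$, $\ell(x,y)$ is $0$ if $x=y$, otherwise the length of a shortest path from $x$ to $y$ in the comparability graph of $(P;\le)$ (vertices $P$, edges between distinct comparable elements), and $\ell(x,y)=\infty$ if there is no such path; $\infty>n$ for all $n<\omega$. For $A\subseteq P$, $\ell(x,A)=\min\{\ell(x,y):y\in A\}$ if $A\neq\emptyset$ and $\ell(x,\emptyset)=\infty$. An order component is a maximal subset of $P$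 in which all distances are finite; $Q_x$ is the order component containing $x$. *)

From Stdlib Require Import List Arith.
Import ListNotations.

Set Implicit Arguments.
Section Defs.
Context {T : Type}.

Definition is_topology (opn : (T -> Prop) -> Prop) : Prop :=
  opn (fun _ => True) /\ opn (fun _ => False) /\
  (forall U V, opn U -> opn V -> opn (fun x => U x /\ V x)) /\
  (forall F : (T -> Prop) -> Prop, (forall U, F U -> opn U) ->
      opn (fun x => exists U, F U /\ U x)) /\
  (forall U V, (forall x, U x <-> V x) -> opn U -> opn V).

Definition compact (opn : (T -> Prop) -> Prop) : Prop :=
  forall F : (T -> Prop) -> Prop, (forall U, F U -> opn U) ->
    (forall x, exists U, F U /\ U x) ->
    exists l : list (T -> Prop), (forall U, In U l -> F U) /\
       (forall x, exists U, In U l /\ U x).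

Definition clopen (opn : (T -> Prop) -> Prop) (X : T -> Prop) : Prop :=
  opn X /\ opn (fun x => ~ X x).

Definition continuous (opn : (T -> Prop) -> Prop) (f : T -> T) : Prop :=
  forall U, opn U -> opn (fun x => U (f x)).

Definition partial_order (le : T -> T -> Prop) : Prop :=
  (forall x, le x x) /\ (forall x y, le x y -> le y x -> x = y) /\
  (forall x y z, le x y -> le y z -> le x z).

Definition decreasing (le : T -> T -> Prop) (X : T -> Prop) : Prop :=
  forall x y, X y -> le x y -> X x.
Definition increasing (le : T -> T -> Prop) (X : T -> Prop) : Prop :=
  forall x y, X x -> le x y -> X y.

Definition upset (le : T -> T -> Prop) (X : T -> Prop) : T -> Prop :=
  fun y => exists x, X x /\ le x y.

Definition priestley_space (opn : (T -> Prop) -> Prop) (le : T -> T -> Prop) : Prop :=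
  is_topology opn /\ compact opn /\ partial_order le /\
  (forall x y, ~ le x y ->
     exists U, clopen opn U /\ increasing le U /\ U x /\ ~ U y).

Definition pm_space (opn : (T -> Prop) -> Prop) (le : T -> T -> Prop) (zeta : T -> T) : Prop :=
  priestley_space opn le /\
  (forall X, clopen opn X -> decreasing le X -> clopen opn (upset le X)) /\
  continuous opn zeta /\
  (forall x y, le x y -> le (zeta y) (zeta x)) /\
  (forall x, zeta (zeta x) = x).

Definition height_le1 (le : T -> T -> Prop) : Prop :=
  forall x y z, le x y -> le y z -> x <> y -> y <> z -> False.

Definition image (zeta : T -> T) (X : T -> Prop) : T -> Prop :=
  fun y => exists x, X x /\ y = zeta x.

Definition pstar (le : T -> T -> Prop) (X : T -> Prop) : T -> Prop :=
  fun x => ~ upset le X x.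
Definition pprime (zeta : T -> T) (X : T -> Prop) : T -> Prop :=
  fun x => ~ image zeta X x.

Fixpoint iter_ps (le : T -> T -> Prop) (zeta : T -> T) (n : nat) (X : T -> Prop)
  : T -> Prop :=
  match n with
  | O => X
  | S k => pstar le (pprime zeta (iter_ps le zeta k X))
  end.

Inductive walk (le : T -> T -> Prop) : T -> T -> nat -> Prop :=
| walk0 : forall x, walk le x x 0
| walkS : forall x z y n, x <> z -> (le x z \/ le z x) -> walk le z y n ->
          walk le x y (S n).

(* ell(x,y) <= n  (ell(x,y) is the least length of such a walk, 0 if x = y, infinite if none) *)
Definition ell_le (le : T -> T -> Prop) (x y : T) (n : nat) : Prop :=
  exists k, k <= n /\ walk le x y k.

(* ell(x,A) > n, where ell(x,A) = min over y in A (infinite if A empty) *)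
Definition ell_set_gt (le : T -> T -> Prop) (x : T) (A : T -> Prop) (n : nat) : Prop :=
  forall y, A y -> ~ ell_le le x y n.

Definition ell_set_inf (le : T -> T -> Prop) (x : T) (A : T -> Prop) : Prop :=
  forall y, A y -> forall n, ~ ell_le le x y n.

Definition Qcomp (le : T -> T -> Prop) (x : T) : T -> Prop :=
  fun y => exists n, ell_le le x y n.

End Defs.

From Stdlib Require Import Arith PeanoNat.
From Stdlib Require Import Classical Lia Bool.

Set Implicit Arguments.

(** In a poset of height at most 1 a walk in the comparability graph
    alternates between upward and downward steps.  So if [D] is decreasing
    for even [k] and increasing for odd [k], a walk of length [k+1] from [x]
    to [D] that starts upwards can be cut before its last step, and one that
    starts downwards at [y < x] is a walk of length [k] from [y]; hence
    [l(x,D) > k+1] iff [l(y,D) > k] for all [y <= x].  On the algebra side,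
    [x] lies in [(Y')*] iff every [y <= x] lies in [zeta(Y)], and [zeta]
    preserves distances while turning [P \ X] into the decreasing set
    [zeta(P \ X)]; induction on [n] matches the two recursions. *)

Section Distance.
Variables (T : Type) (le : T -> T -> Prop).

Lemma ell_set_gt_0 (x : T) (A : T -> Prop) : ell_set_gt le x A 0 <-> ~ A x.
Proof.
  split.
  - intros H Ax. apply (H x Ax). exists 0. split; [lia | constructor].
  - intros H y Ay [j [Hj W]].
    assert (j = 0) by lia; subst. inversion W; subst. contradiction.
Qed.

Lemma ell_set_gt_ext (x : T) (A A' : T -> Prop) (k : nat) :
  (forall y, A y <-> A' y) -> ell_set_gt le x A k <-> ell_set_gt le x A' k.
Proof.
  intros HA. split; intros H y Hy; apply H; apply HA; exact Hy.
Qed.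

Lemma ell_set_inf_iff_disjoint (x : T) (A : T -> Prop) :
  ell_set_inf le x A <-> (forall y, Qcomp le x y -> ~ A y).
Proof.
  split.
  - intros H y [n Hn] Ay. exact (H y Ay n Hn).
  - intros H y Ay n Hn. exact (H y (ex_intro _ n Hn) Ay).
Qed.

Lemma pstar_pprime_iff (zeta : T -> T) (Y : T -> Prop) (x : T) :
  pstar le (pprime zeta Y) x <-> (forall y, le y x -> image zeta Y y).
Proof.
  split.
  - intros H y Hyx. apply NNPP. intro Hy. apply H. exists y. auto.
  - intros H [y [Hy Hyx]]. exact (Hy (H y Hyx)).
Qed.

End Distance.

Section HeightOne.
Variables (T : Type) (le : T -> T -> Prop).
Hypothesis le_refl : forall x, le x x.
Hypothesis height : height_le1 le.

(* [u] is the penultimate vertex of the walk [x, z, ..., a] and [b] the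
   direction of its first step ([true] = upwards); by alternation the last
   step [u -- a] points up iff [b] and [m] is even or [~~ b] and [m] is odd. *)
Lemma walk_alternating (b : bool) (x z a : T) (m : nat) :
  x <> z -> (if b then le x z else le z x) -> walk le z a m ->
  exists u, walk le x u m /\ (if xorb b (Nat.odd m) then le u a else le a u).
Proof.
  intros Hxz Hb W. revert b x Hxz Hb.
  induction W as [z | z w a n Hzw Hc W IHW]; intros b x Hxz Hb.
  - exists x. split; [constructor |]. simpl. rewrite xorb_false_r. exact Hb.
  - assert (Hnb : if negb b then le z w else le w z).
    { destruct b, Hc; simpl; auto; exfalso; eapply height; eauto. }
    destruct (IHW (negb b) z Hzw Hnb) as [u [Wu Hu]].
    exists u. split.
    + apply walkS with z; auto. destruct b; auto.
    + rewrite Nat.odd_succ, <- Nat.negb_odd.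
      destruct b, (Nat.odd n); exact Hu.
Qed.

Lemma ell_set_gt_succ (D : T -> Prop) (k : nat) (x : T) :
  (if Nat.even k then decreasing le D else increasing le D) ->
  ell_set_gt le x D (S k) <-> (forall y, le y x -> ell_set_gt le y D k).
Proof.
  intros HD. split.
  - intros H y Hyx d Hd [j [Hj W]]. apply (H d Hd).
    destruct (classic (y = x)) as [<- | Hyx'].
    + exists j. split; [lia | exact W].
    + exists (S j). split; [lia |]. apply walkS with y; auto.
  - intros H d Hd [j [Hj W]].
    destruct (le_lt_dec j k) as [Hjk | Hkj].
    { apply (H x (le_refl x) d Hd). exists j. auto. }
    assert (j = S k) by lia; subst j.
    inversion W as [| ? z ? ? Hxz Hc Wz]; subst.
    destruct Hc as [Hup | Hdown].
    + (* drop the last step: its source [u] lies in [D] by monotonicity *)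
      destruct (walk_alternating true Hxz Hup Wz) as [u [Wu Hu]].
      rewrite xorb_true_l, Nat.negb_odd in Hu.
      assert (Du : D u) by (destruct (Nat.even k); eauto).
      apply (H x (le_refl x) u Du). exists k. auto.
    + apply (H z Hdown d Hd). exists k. auto.
Qed.

End HeightOne.

Section Involution.
Variables (T : Type) (le : T -> T -> Prop) (zeta : T -> T).
Hypothesis zeta_antitone : forall x y, le x y -> le (zeta y) (zeta x).
Hypothesis zeta_involutive : forall x, zeta (zeta x) = x.

Lemma image_involution_iff (Y : T -> Prop) (y : T) :
  image zeta Y y <-> Y (zeta y).
Proof.
  split.
  - intros [w [Hw ->]]. rewrite zeta_involutive. exact Hw.
  - intros Hy. exists (zeta y). rewrite zeta_involutive. auto.
Qed.

Lemma walk_involution (x y : T) (n : nat) :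
  walk le x y n -> walk le (zeta x) (zeta y) n.
Proof.
  induction 1 as [x | x z y n Hxz Hc W IHW]; [constructor |].
  apply walkS with (zeta z); auto.
  - intro E. apply Hxz. rewrite <- (zeta_involutive x), E, zeta_involutive. reflexivity.
  - destruct Hc; auto.
Qed.

Lemma ell_le_involution (x y : T) (n : nat) :
  ell_le le (zeta x) (zeta y) n <-> ell_le le x y n.
Proof.
  split; intros [j [Hj W]]; exists j; split; auto.
  - rewrite <- (zeta_involutive x), <- (zeta_involutive y).
    apply walk_involution; exact W.
  - apply walk_involution; exact W.
Qed.

Lemma ell_set_gt_involution (D : T -> Prop) (k : nat) (y : T) :
  ell_set_gt le (zeta y) D k <-> ell_set_gt le y (image zeta D) k.
Proof.
  split.
  - intros H a Ha Hya. apply image_involution_iff in Ha.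
    apply (H (zeta a) Ha). apply ell_le_involution. exact Hya.
  - intros H b Hb Hyb. apply (H (zeta b)).
    + apply image_involution_iff. rewrite zeta_involutive. exact Hb.
    + apply ell_le_involution. rewrite zeta_involutive. exact Hyb.
Qed.

Lemma image_involution_decreasing (B : T -> Prop) :
  increasing le B -> decreasing le (image zeta B).
Proof.
  intros HB x y Hy Hxy. apply image_involution_iff in Hy.
  apply image_involution_iff. exact (HB _ _ Hy (zeta_antitone Hxy)).
Qed.

Definition parity_set (n : nat) (B : T -> Prop) : T -> Prop :=
  if Nat.even n then B else image zeta B.

Lemma image_parity_set (n : nat) (B : T -> Prop) (y : T) :
  image zeta (parity_set n B) y <-> parity_set (S n) B y.
Proof.
  unfold parity_set. rewrite Nat.even_succ, <- Nat.negb_even.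
  destruct (Nat.even n); simpl; [reflexivity |].
  rewrite image_involution_iff, image_involution_iff, zeta_involutive.
  reflexivity.
Qed.

Lemma parity_set_monotone (n : nat) (B : T -> Prop) :
  increasing le B ->
  if Nat.even n then decreasing le (parity_set (S n) B)
  else increasing le (parity_set (S n) B).
Proof.
  intros HB. unfold parity_set. rewrite Nat.even_succ, <- Nat.negb_even.
  destruct (Nat.even n); simpl; auto using image_involution_decreasing.
Qed.

Hypothesis le_refl : forall x, le x x.
Hypothesis height : height_le1 le.

Lemma iter_ps_ell_set_gt (X : T -> Prop) (n : nat) (x : T) :
  decreasing le X ->
  iter_ps le zeta n X x <-> ell_set_gt le x (parity_set n (fun y => ~ X y)) n.
Proof.
  intros HX. set (B := fun y => ~ X y).
  assert (HB : increasing le B) by (intros u v Hu Huv Hv; exact (Hu (HX u v Hv Huv))).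
  revert x. induction n as [| n IH]; intro x.
  - simpl. rewrite ell_set_gt_0. split; [intros Hx Hn; exact (Hn Hx) | apply NNPP].
  - assert (Himage : forall y, image zeta (iter_ps le zeta n X) y <->
                               ell_set_gt le y (parity_set (S n) B) n).
    { intro y. rewrite image_involution_iff, IH, ell_set_gt_involution.
      apply ell_set_gt_ext, image_parity_set. }
    simpl iter_ps. rewrite pstar_pprime_iff.
    rewrite (ell_set_gt_succ le_refl height _ _ x (parity_set_monotone n HB)).
    split; intros H y Hyx; apply Himage; auto.
Qed.

Lemma image_involution_disjoint (Q B : T -> Prop) :
  (forall y, Q y -> ~ image zeta B y) <-> (forall y, image zeta Q y -> ~ B y).
Proof.
  split; intros H y Hy HB.
  - apply image_involution_iff in Hy. apply (H (zeta y) Hy).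
    apply image_involution_iff. rewrite zeta_involutive. exact HB.
  - apply image_involution_iff in HB. apply (H (zeta y)); [| exact HB].
    apply image_involution_iff. rewrite zeta_involutive. exact Hy.
Qed.

End Involution.

Theorem lemma3p2 (T : Type) (opn : (T -> Prop) -> Prop) (le : T -> T -> Prop)
  (zeta : T -> T)
  (HP : pm_space opn le zeta) (Hh : height_le1 le)
  (X : T -> Prop) (HXc : clopen opn X) (HXd : decreasing le X) :
  (forall n : nat, forall x : T,
     iter_ps le zeta n X x <->
     (if Nat.even n
      then ell_set_gt le x (fun y => ~ X y) n
      else ell_set_gt le x (image zeta (fun y => ~ X y)) n)) /\
  (forall x : T,
     (ell_set_inf le x (fun y => ~ X y) <-> (forall y, Qcomp le x y -> X y)) /\
     (ell_set_inf le x (image zeta (fun y => ~ X y)) <->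
        (forall y, image zeta (Qcomp le x) y -> X y))).
Proof.
  destruct HP as [[_ [_ [[Hrefl _] _]]] [_ [_ [Hrev Hinv]]]].
  split.
  - intros n x.
    rewrite (iter_ps_ell_set_gt zeta Hrev Hinv Hrefl Hh n x HXd).
    unfold parity_set. destruct (Nat.even n); reflexivity.
  - intro x. rewrite !ell_set_inf_iff_disjoint, image_involution_disjoint by assumption.
    split; split; intros H y Hy; [apply NNPP | | apply NNPP |]; auto.
Qed.
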